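(* Let $x\in\mathbb{R}^n$. If $u\in\partial\|\cdot\|_{1,2}(Lx)$ (the subdifferential of $\|\cdot\|_{1,2}$ at $Lx$), then $P_{T_L^\perp}P_{T_z}u=0$.
   Context: Let $n,N\in\mathbb{N}$, let $G_1,\dots,G_N\subseteq\{1,\dots,n\}$ be nonempty groups, possibly overlapping, with $\bigcup_iG_i=\{1,\dots,n\}$, and weights $w_i>0$. $x_G$ is the subvector of $x$ indexed by $G$ (increasing order). Let $p=\sum_i|G_i|$, partition $\{1,\dots,p\}$ into consecutive blocks $J_i=\{\sum_{j<i}|G_j|+1,\dots,\sum_{j\le i}|G_j|\}$, and define $L\in\mathbb{R}^{p\times n}$ by $(Lx)_{J_i}=w_ix_{G_i}$. For $z\in\mathbb{R}^p$, $\|z\|_{1,2}=\sum_i\|z_{J_i}\|$ (Euclidean); $u\in\partial\|\cdot\|_{1,2}(z)$ iff $u_{J_i}=z_{J_i}/\|z_{J_i}\|$ when $z_{J_i}\ne0$ and $\|u_{J_i}\|\le1$ when $z_{J_i}=0$. For $x\in\mathbb{R}^n$: $\mathcal{I}_x=\{t:x_{G_t}\ne0\}$; $\mathcal{E}_x=\{1,\dots,n\}\setminus\bigcup_{t\notin\mathcal{I}_x}G_t$, $T_x=\{x':\mathrm{supp}(x')\subseteq\mathcal{E}_x\}$; $\mathcal{E}_z=\bigcup_{t\in\mathcal{I}_x}J_t$, $T_z=\{z':\mathrm{supp}(z')\subseteq\mathcal{E}_z\}$; $\mathcal{E}_L=\mathrm{supp}(LP_{T_x}\mathbf{1}_n)$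 with $\mathbf{1}_n$ the all-ones vector, $T_L=\{z':\mathrm{supp}(z')\subseteq\mathcal{E}_L\}$. $P_T$ is the orthogonal (coordinate) projection onto $T$ and $T^\perp$ its orthogonal complement. *)

From HB Require Import structures.
From mathcomp Require Import all_boot all_order all_algebra.
Unset Printing Implicit Defensive.
Import Order.TTheory GRing.Theory Num.Theory.
Local Open Scope ring_scope.

(* Indices {1..n} are rendered as 'I_n, groups as G : 'I_N -> {set 'I_n}. *)

Definition psize {n N : nat} (G : 'I_N -> {set 'I_n}) : nat :=
  (\sum_(i < N) #|G i|)%N.

Definition bstart {n N : nat} (G : 'I_N -> {set 'I_n}) (i : 'I_N) : nat :=
  (\sum_(j < N | (j < i)%N) #|G j|)%N.

Definition block {n N : nat} (G : 'I_N -> {set 'I_n}) (i : 'I_N)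
  : {set 'I_(psize G)} :=
  [set q : 'I_(psize G) | (bstart G i <= q < bstart G i + #|G i|)%N].

(* k-th element (0-based) of G_i in increasing order (enum of a set of
   ordinals lists its elements in increasing order) *)
Definition gmap {n N : nat} (G : 'I_N -> {set 'I_n}) (i : 'I_N) (k : nat) : nat :=
  nth 0%N [seq val j | j <- enum (G i)] k.

(* the matrix L : (Lx)_{J_i} = w_i x_{G_i} *)
Definition Lmat {R : nzRingType} {n N : nat} (G : 'I_N -> {set 'I_n}) (w : 'I_N -> R)
  : 'M[R]_(psize G, n) :=
  \matrix_(q, c) \sum_(i < N)
     (if (q \in block G i) && (val c == gmap G i (q - bstart G i)%N)
      then w i else 0).

(* coordinate projection onto T = {v | supp v ⊆ E} *)
Definition proj {R : nzRingType} {m : nat} (E : {set 'I_m}) (v : 'cV[R]_m) : 'cV[R]_m :=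
  \col_i (if i \in E then v i 0 else 0).

Definition blocknorm {R : rcfType} {n N : nat} (G : 'I_N -> {set 'I_n})
  (z : 'cV[R]_(psize G)) (i : 'I_N) : R :=
  Num.sqrt (\sum_(q in block G i) z q 0 ^+ 2).

(* u ∈ ∂‖·‖_{1,2}(z), as characterized in the paper *)
Definition subdiff12 {R : rcfType} {n N : nat} (G : 'I_N -> {set 'I_n})
  (u z : 'cV[R]_(psize G)) : Prop :=
  forall i : 'I_N,
    ([exists q in block G i, z q 0 != 0] ->
       forall q, q \in block G i -> u q 0 = z q 0 / blocknorm G z i)
    /\ (~~ [exists q in block G i, z q 0 != 0] -> blocknorm G u i <= 1).

Definition Ix {R : nzRingType} {n N : nat} (G : 'I_N -> {set 'I_n}) (x : 'cV[R]_n)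
  : {set 'I_N} :=
  [set t | [exists j in G t, x j 0 != 0]].

Definition Ex {R : nzRingType} {n N : nat} (G : 'I_N -> {set 'I_n}) (x : 'cV[R]_n)
  : {set 'I_n} :=
  ~: (\bigcup_(t | t \notin Ix G x) G t).

Definition Ez {R : nzRingType} {n N : nat} (G : 'I_N -> {set 'I_n}) (x : 'cV[R]_n)
  : {set 'I_(psize G)} :=
  \bigcup_(t in Ix G x) block G t.

Definition EL {R : nzRingType} {n N : nat} (G : 'I_N -> {set 'I_n}) (w : 'I_N -> R)
  (x : 'cV[R]_n) : {set 'I_(psize G)} :=
  [set q | (Lmat G w *m proj (Ex G x) (const_mx 1)) q 0 != 0].

From HB Require Import structures.
From mathcomp Require Import all_boot all_order all_algebra.
From mathcomp Require Import zify.
Set Implicit Arguments.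
Unset Strict Implicit.
Import Order.TTheory GRing.Theory Num.Theory.
Local Open Scope ring_scope.

(* Row q of the block J_t of L has a single nonzero entry w_t, in the column
   c of G_t read by q, so (Lx)_q = w_t x_c.  If t is in I_x then (Lx)_{J_t}
   is nonzero, hence u_q = (Lx)_q / |(Lx)_{J_t}|.  If moreover q is outside
   E_L then (L P_{T_x} 1)_q = w_t [c in E_x] vanishes, so c lies in a group
   G_s with x_{G_s} = 0; thus x_c = 0 and u_q = 0. *)

Section Blocks.

Variables (n N : nat) (G : 'I_N -> {set 'I_n}).

Lemma block_end_le_bstart (i t : 'I_N) :
  (i < t)%N -> (bstart G i + #|G i| <= bstart G t)%N.
Proof.
move=> lt_it; rewrite /bstart [X in (_ <= X)%N](bigID (fun j : 'I_N => (j < i)%N)) /=.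
rewrite [X in (_ <= X + _)%N](eq_bigl (fun j : 'I_N => (j < i)%N)); last first.
  by move=> j /=; apply/andP/idP => [[]//|lt_ji]; split=> //; exact: ltn_trans lt_it.
by rewrite leq_add2l (bigD1 i) /= ?lt_it ?ltnn // leq_addr.
Qed.

Lemma block_end_le_psize (t : 'I_N) : (bstart G t + #|G t| <= psize G)%N.
Proof.
rewrite /psize /bstart [X in (_ <= X)%N](bigID (fun j : 'I_N => (j < t)%N)) /=.
by rewrite leq_add2l (bigD1 t) /= ?ltnn // leq_addr.
Qed.

Lemma block_disjoint (i t : 'I_N) q : q \in block G i -> q \in block G t -> i = t.
Proof.
rewrite !inE => /andP[qi1 qi2] /andP[qt1 qt2].
case: (ltngtP i t) => [lt_it|lt_ti|/val_inj //].
- by have := block_end_le_bstart lt_it; lia.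
- by have := block_end_le_bstart lt_ti; lia.
Qed.

Lemma gmap_block (t : 'I_N) (q : 'I_(psize G)) :
  q \in block G t -> exists2 c : 'I_n, c \in G t & val c = gmap G t (q - bstart G t).
Proof.
rewrite inE => /andP[q1 q2].
have : (q - bstart G t < size (enum (G t)))%N by rewrite -cardE; lia.
case Et: (enum (G t)) => [|d s] //= lt_k.
exists (nth d (enum (G t)) (q - bstart G t)); first by rewrite -mem_enum mem_nth // Et.
by rewrite /gmap (nth_map d) // Et.
Qed.

Lemma block_gmap (t : 'I_N) (c : 'I_n) :
  c \in G t -> exists2 q : 'I_(psize G), q \in block G t & val c = gmap G t (q - bstart G t).
Proof.
move=> cG; have lt_k : (index c (enum (G t)) < #|G t|)%N.
  by rewrite cardE index_mem mem_enum.
have lt_q : (bstart G t + index c (enum (G t)) < psize G)%N.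
  by have := block_end_le_psize t; lia.
exists (Ordinal lt_q); first by rewrite inE /= leq_addr ltn_add2l.
by rewrite /= addKn /gmap (nth_map c) ?nth_index ?index_mem ?mem_enum.
Qed.

Variables (R : nzRingType) (w : 'I_N -> R).

Lemma Lmat_block (t : 'I_N) q c : q \in block G t ->
  Lmat G w q c = if val c == gmap G t (q - bstart G t) then w t else 0.
Proof.
move=> qt; rewrite mxE (bigD1 t) //= qt big1 ?addr0 // => i ne_it.
by case: ifP => // /andP[qi _]; rewrite (block_disjoint qi qt) eqxx in ne_it.
Qed.

Lemma mulmx_Lmat_block (t : 'I_N) q (c : 'I_n) (y : 'cV[R]_n) :
  q \in block G t -> val c = gmap G t (q - bstart G t) ->
  (Lmat G w *m y) q 0 = w t * y c 0.
Proof.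
move=> qt vc; rewrite mxE (bigD1 c) //= (Lmat_block _ qt) vc eqxx big1 ?addr0 // => c' ne_c'c.
rewrite (Lmat_block _ qt); case: eqP => [vc'|]; last by rewrite mul0r.
by case/eqP: ne_c'c; apply: val_inj; rewrite vc' vc.
Qed.

End Blocks.

Section Support.

Variables (R : idomainType) (n N : nat) (G : 'I_N -> {set 'I_n}).
Variables (w : 'I_N -> R) (x : 'cV[R]_n).

Lemma notin_Ex_eq0 (c : 'I_n) : c \notin Ex G x -> x c 0 = 0.
Proof.
rewrite inE negbK => /bigcupP[s sIx cs].
by move: sIx; rewrite inE => /existsPn/(_ c); rewrite cs => /negPn/eqP.
Qed.

Lemma Lmat_Ix_block_neq0 (t : 'I_N) : t \in Ix G x -> w t != 0 ->
  [exists q in block G t, (Lmat G w *m x) q 0 != 0].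
Proof.
rewrite inE => /existsP[c /andP[cG xc]] wt; have [q qt vc] := block_gmap cG.
by apply/existsP; exists q; rewrite qt (mulmx_Lmat_block _ _ qt vc) mulf_neq0.
Qed.

Lemma Lmat_notin_EL_eq0 (t : 'I_N) q : q \in block G t -> w t != 0 ->
  q \notin EL G w x -> (Lmat G w *m x) q 0 = 0.
Proof.
move=> qt wt; have [c _ vc] := gmap_block qt.
rewrite inE negbK !(mulmx_Lmat_block _ _ qt vc) mxE.
case: ifP => [_|/negbT/notin_Ex_eq0 -> _]; last by rewrite mulr0.
by rewrite mxE mulr1 (negbTE wt).
Qed.

End Support.

Theorem lemmaA3 (R : rcfType) (n N : nat) (G : 'I_N -> {set 'I_n})
  (w : 'I_N -> R) (x : 'cV[R]_n) (u : 'cV[R]_(psize G)) :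
  (forall i, G i != set0) ->
  \bigcup_(i < N) G i = [set: 'I_n] ->
  (forall i, 0 < w i) ->
  subdiff12 G u (Lmat G w *m x) ->
  proj (~: EL G w x) (proj (Ez G x) u) = 0.
Proof.
move=> _ _ w_gt0 u_sub; apply/matrixP => q j; rewrite !mxE.
case: ifP => // qEL; case: ifP => // /bigcupP[t tIx qt].
have wt : w t != 0 by rewrite gt_eqF.
have [u_eq _] := u_sub t.
rewrite (u_eq (Lmat_Ix_block_neq0 tIx wt) q qt).
by rewrite (Lmat_notin_EL_eq0 qt wt) ?mul0r // -in_setC qEL.
Qed.
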